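(* Let $k\geq 3$ be an integer. Every strongly connected tournament on $2k-1$ vertices contains a subdivision of $B(k,1;1)$.
   Context: A tournament is an orientation of a complete graph. A digraph is strongly connected if every vertex can reach every other vertex by a directed path. For positive integers $k_1,k_2,k_3$, a digraph $D$ contains a subdivision of $B(k_1,k_2;k_3)$ if there exist distinct vertices $x,y$ of $D$ and three pairwise internally vertex-disjoint directed paths in $D$: two from $x$ to $y$, of lengths (numbers of arcs) at least $k_1$ and at least $k_2$ respectively, and one from $y$ to $x$ of length at least $k_3$. *)

From mathcomp Require Import all_boot.
Set Implicit Arguments. Unset Strict Implicit. Unset Printing Implicit Defensive.

(* A digraph on a finite vertex type T is given by its arc relation E : rel T
   (E u v means there is an arc u -> v). *)

Definition is_tournament (T : finType) (E : rel T) : Prop :=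
  (forall u, ~~ E u u) /\
  (forall u v, u != v -> (E u v || E v u)) /\
  (forall u v, E u v -> ~~ E v u).

Definition strongly_connected (T : finType) (E : rel T) : Prop :=
  forall u v : T, connect E u v.

(* q is the sequence of internal vertices of a directed path from x to y,
   i.e. x :: q ++ [:: y] is a sequence of pairwise distinct vertices with
   consecutive ones joined by arcs. Its length (number of arcs) is size q + 1. *)
Definition dipath (T : finType) (E : rel T) (x y : T) (q : seq T) : bool :=
  path E x (rcons q y) && uniq (x :: rcons q y).

(* D contains a subdivision of B(k1,k2;k3). Internal vertex disjointness is
   expressed on the sequences of internal vertices. *)
Definition contains_subdiv_B (T : finType) (E : rel T) (k1 k2 k3 : nat) : Prop :=
  exists (x y : T) (q1 q2 q3 : seq T),
    [/\ x != y, dipath E x y q1, dipath E x y q2, dipath E y x q3 &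
        [/\ [&& k1 <= (size q1).+1, k2 <= (size q2).+1 & k3 <= (size q3).+1],
             [disjoint q1 & q2], [disjoint q1 & q3] & [disjoint q2 & q3]]].

From mathcomp Require Import all_boot zify.
Set Implicit Arguments. Unset Strict Implicit. Unset Printing Implicit Defensive.

(* By Camion's theorem the tournament has a Hamiltonian cycle v_0 ... v_{2k-2}.
   It is grown from a 3-cycle one vertex at a time: an outside vertex with both
   an in- and an out-neighbour on the cycle can be inserted between two
   consecutive cycle vertices; otherwise every outside vertex dominates the
   cycle or is dominated by it, strong connectivity gives an arc x -> y from a
   dominated x to a dominating y, and x, y replace one cycle vertex.
   On the Hamiltonian cycle, an arc v_i -> v_j that skips at least k - 1
   vertices gives B(k,1;1) at once: the cycle path from v_i to v_j, the arc, and
   the rest of the cycle back to v_i. So every pair at cycle distance 2 or k - 1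
   is oriented forward, and then v_0 v_2 ... v_{k-1} v_{k+1} ... v_{2k-2} v_1
   (of length 2k - 3 >= k), the arc v_0 v_1 and v_1 v_k v_0 form B(k,1;1). *)

Lemma ucycle_catC (T : eqType) (E : rel T) (s1 s2 : seq T) :
  ucycle E (s1 ++ s2) = ucycle E (s2 ++ s1).
Proof. by rewrite -(rot_ucycle (size s1)) rot_size_cat. Qed.

Lemma ucycle_insert (T : eqType) (E : rel T) v a b p :
  ucycle E (b :: rcons p a) -> v \notin b :: rcons p a -> E a v -> E v b ->
  ucycle E (v :: b :: rcons p a).
Proof.
case/andP=> /= /[!rcons_path] /andP[pb _] Ub vc Eav Evb.
by rewrite /ucycle /= !rcons_path last_rcons pb Evb Eav vc.
Qed.

Lemma ucycle_bypass (T : eqType) (E : rel T) c0 c1 c2 r x y :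
  ucycle E [:: c0, c1, c2 & r] -> x \notin [:: c0, c1, c2 & r] ->
  y \notin [:: c0, c1, c2 & r] -> x != y -> E c0 x -> E x y -> E y c2 ->
  ucycle E [:: c0, x, y, c2 & r].
Proof.
case/andP=> /= /and3P[_ _ pr] /and4P[]; rewrite !inE !negb_or.
move=> /and3P[_ c0c2 c0r] _ c2r Ur /and4P[xc0 _ xc2 xr] /and4P[yc0 _ yc2 yr].
move=> xy Ec0x Exy Eyc2; rewrite /ucycle /= Ec0x Exy Eyc2 pr !inE !negb_or.
by rewrite (eq_sym c0 x) (eq_sym c0 y) xc0 yc0 c0c2 c0r xy xc2 xr yc2 yr c2r.
Qed.

Lemma split_at_switch (T : eqType) (f : pred T) x p :
  ~~ f x -> has f p ->
  exists L a b R, [/\ x :: p = L ++ a :: b :: R, ~~ f a & f b].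
Proof.
elim: p x => [|y p IH] x //= fx /orP[fy|hp].
  by exists [::], x, y, p.
case fy: (f y); first by exists [::], x, y, p; rewrite fy.
have [L [a [b [R [-> fa fb]]]]] := IH y (negbT fy) hp.
by exists (x :: L), a, b, R.
Qed.

Lemma exists_notin (T : finType) (s : seq T) :
  size s < #|T| -> exists x, x \notin s.
Proof.
move=> sT; apply/existsP; apply: contraTT sT; rewrite negb_exists -leqNgt.
move=> /forallP /(_ _) /negbNE allc; rewrite (leq_trans _ (card_size s)) //.
by apply: subset_leq_card; apply/subsetP.
Qed.

Lemma connect_exit (T : finType) (E : rel T) (P : pred T) u w :
  connect E u w -> P u -> ~~ P w -> exists x y, [/\ P x, ~~ P y & E x y].
Proof.
case/connectP => p pp ->; elim: p u pp => [|z p IH] u /=; first by move=> _ ->.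
case/andP=> Euz pz Pu Pl; case Pz: (P z); first exact: IH Pz Pl.
by exists u, z; rewrite Pz.
Qed.

Section Tournament.
Variables (T : finType) (E : rel T).
Hypothesis tourE : is_tournament E.

Lemma tournament_irrefl u : ~~ E u u.
Proof. by case: tourE. Qed.

Lemma tournament_arc_neq u v : E u v -> u != v.
Proof. by apply: contraTneq => ->; apply: tournament_irrefl. Qed.

Lemma tournament_asym u v : E u v -> ~~ E v u.
Proof. by case: tourE => _ [_]; apply. Qed.

Lemma tournament_flip u v : u != v -> ~~ E u v -> E v u.
Proof. by case: tourE => _ [tot _] /tot /orP[->|]. Qed.

Lemma tournament_3cycle : strongly_connected E -> 1 < #|T| ->
  exists c, ucycle E c /\ size c = 3.
Proof.
move=> scE /card_gt1P[u [v [_ _ uv]]].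
have [_ [x [/eqP-> _ Evx]]] :=
  connect_exit (scE v u) (eqxx v : pred1 v v) (uv : ~~ pred1 v u).
have [y [z [Evy Evz Eyz]]] := connect_exit (scE x v) Evx (tournament_irrefl v).
have vz : v != z by apply: contraTneq Eyz => <-; apply: tournament_asym.
exists [:: v; y; z]; split=> //.
rewrite /ucycle /= Evy Eyz tournament_flip //= !inE negb_or.
by rewrite vz (tournament_arc_neq Evy) (tournament_arc_neq Eyz).
Qed.

Lemma ucycle_extend_mixed c u v w : ucycle E c -> v \notin c ->
  u \in c -> w \in c -> E u v -> E v w ->
  exists c', ucycle E c' /\ size c' = (size c).+1.
Proof.
move=> Uc vc uc wc Euv Evw; have [i p crot] := rot_to uc.
have Evu := tournament_asym Euv.
have hp : has (E v) p.
  apply/hasP; exists w => //; move: wc; rewrite -(mem_rot i) crot inE.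
  by case/predU1P=> // wu; move: Evu; rewrite -wu Evw.
have [L [a [b [R [eLR Eva Evb]]]]] := split_at_switch Evu hp.
have Er : b :: rcons (R ++ L) a = rot (size (rcons L a)) (rot i c).
  by rewrite crot eLR -cat_rcons rot_size_cat rcons_cat.
have ac : a \in c by rewrite -(mem_rot i) crot eLR mem_cat mem_head orbT.
have Eav : E a v by apply: tournament_flip Eva; apply: contraNneq vc => ->.
exists (v :: b :: rcons (R ++ L) a); split.
  by apply: ucycle_insert; rewrite // Er ?rot_ucycle ?mem_rot.
by rewrite Er /= !size_rot.
Qed.

Lemma ucycle_extend c : strongly_connected E -> ucycle E c ->
  3 <= size c -> size c < #|T| ->
  exists c', ucycle E c' /\ size c' = (size c).+1.
Proof.
move=> scE Uc c3 cT.
have [v0 v0c] := exists_notin cT.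
case: (boolP [exists v, [&& v \notin c, has (E^~ v) c & has (E v) c]]).
  case/existsP=> v /and3P[vc /hasP[u uc Euv] /hasP[w wc Evw]].
  exact: ucycle_extend_mixed Euv Evw.
move/existsPn=> nomix.
have dominated v u w : v \notin c -> u \in c -> w \in c -> E u v -> E w v.
  move=> vc uc wc Euv; apply: tournament_flip; first by apply: contraNneq vc => ->.
  apply: contra (nomix v) => Evw; rewrite vc /=.
  by apply/andP; split; apply/hasP; [exists u | exists w].
have dominating v u w : v \notin c -> u \in c -> w \in c -> E v u -> E v w.
  move=> vc uc wc Evu; apply: tournament_flip; first by apply: contraNneq vc => <-.
  apply: contra (nomix v) => Ewv; rewrite vc /=.
  by apply/andP; split; apply/hasP; [exists w | exists u].
case: c Uc c3 cT v0c dominated dominating {nomix} => [|c0 [|c1 [|c2 r]]] //= Uc _ _ v0c.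
set c := [:: c0, c1, c2 & r] => dominated dominating.
have c0c : c0 \in c by rewrite mem_head.
have [d [dc Ec0d]] : exists d, d \notin c /\ E c0 d.
  have [x [y [xc yc Exy]]] := connect_exit (scE c0 v0) c0c v0c.
  by exists y; split; last exact: dominated yc xc c0c Exy.
have [x [y [/andP[xc Ec0x] Py Exy]]] :=
  connect_exit (P := [pred z | (z \notin c) && E c0 z])
    (scE d c0) ltac:(by rewrite /= dc Ec0d) ltac:(by rewrite /= c0c).
have yc : y \notin c.
  by apply: contraTN Exy => yc; apply: tournament_asym; apply: dominated xc c0c yc Ec0x.
have Eyc0 : E y c0.
  by apply: tournament_flip; [apply: contraNneq yc => <- | move: Py; rewrite /= yc].
exists [:: c0, x, y, c2 & r]; split=> //.
have c2c : c2 \in c by rewrite !inE eqxx !orbT.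
by apply: (ucycle_bypass (c1 := c1)); rewrite ?tournament_arc_neq //;
  exact: dominating yc c0c c2c Eyc0.
Qed.

Theorem tournament_hamiltonian : strongly_connected E -> 3 <= #|T| ->
  exists c, ucycle E c /\ size c = #|T|.
Proof.
move=> scE T3.
suff: forall m, 3 <= m <= #|T| -> exists c, ucycle E c /\ size c = m.
  by apply; rewrite T3 leqnn.
elim=> // m IH /andP[m3 mT]; case: (leqP m 2) => [m2 | m2].
  have [c [Uc Sc]] := tournament_3cycle scE (ltnW T3).
  by exists c; split=> //; lia.
have [c [Uc Sc]] := IH ltac:(lia).
by rewrite -Sc; apply: ucycle_extend; rewrite ?Sc.
Qed.

End Tournament.

Section Subdivision.
Variables (T : finType) (E : rel T) (k : nat).

Lemma subdiv_of_chord x P y Q : ucycle E (x :: P ++ y :: Q) -> E x y ->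
  k <= (size P).+1 -> contains_subdiv_B E k 1 1.
Proof.
case/andP=> C U Exy Pk.
have U1 : uniq (x :: rcons P y).
  by move: U; rewrite -cat_rcons -cat_cons cat_uniq => /andP[].
have U2 : uniq (y :: rcons Q x).
  by move: U; rewrite -cat_cons uniq_catC -cat_rcons rcons_cons cat_uniq => /andP[].
have xy : x != y by move: U1; rewrite /= mem_rcons inE negb_or => /andP[/andP[]].
have PQ : [disjoint P & Q].
  move: U; rewrite -cat_cons cat_uniq disjoint_has => /and3P[_ + _]; apply: contra.
  by case/hasP=> z zQ zP; apply/hasP; exists z; rewrite inE ?zQ ?zP ?orbT.
move: C; rewrite /= rcons_cat cat_path /= rcons_path => /andP[pP /andP[Ey pQ]].
exists x, y, P, [::], Q; split => //.
- by rewrite /dipath U1 rcons_path pP Ey.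
- by rewrite /dipath /= Exy /= inE xy.
- by rewrite /dipath U2 rcons_path pQ.
split=> //; [by rewrite Pk | rewrite disjoint_sym |]; exact: eq_disjoint0.
Qed.

Lemma subdiv_of_forward_arcs (a b a2 c b1 : T) (A B : seq T) :
  ucycle E [:: a, b, a2 & A ++ c :: b1 :: B] -> k <= (size A + size B).+3 ->
  E a a2 -> E (last a2 A) b1 -> E (last b1 B) b -> E b c -> E c a ->
  contains_subdiv_B E k 1 1.
Proof.
move=> Us Sk Eaa2 EaLb1 EbLb Ebc Eca.
have Uq := ucycle_uniq Us.
case/andP: Us => + _; rewrite /= rcons_cat cat_path /= rcons_path.
case/and3P=> Eab _ /and3P[pA _ /and3P[_ pB _]].
have ab : a != b by move: Uq => /andP[+ _]; apply: contraNneq => ->; rewrite mem_head.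
have cq1 : c \notin a2 :: A ++ b1 :: B.
  have : uniq ((a2 :: A) ++ [:: c] ++ b1 :: B) by case/and3P: Uq.
  by rewrite (perm_uniq (permEl (perm_catCA _ _ _))) => /andP[].
have Upath1 : uniq (a :: rcons (a2 :: A ++ b1 :: B) b).
  rewrite (perm_uniq (_ : perm_eq _ [:: a, b, a2 & A ++ b1 :: B])).
    exact: subseq_uniq (cat_subseq (subseq_refl [:: a, b, a2 & A]) (subseq_cons _ c)) Uq.
  by rewrite perm_cons perm_rcons.
have Upath3 : uniq [:: b; c; a].
  apply: (@subseq_uniq _ _ (rot 1 [:: a, b, a2 & A ++ c :: b1 :: B]));
    last by rewrite rot_uniq.
  apply: (@cat_subseq _ [:: b; c] [:: a] [:: b, a2 & A ++ c :: b1 :: B]) => //.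
  apply: (@cat_subseq _ [:: b] [:: c] [:: b]) => //.
  by rewrite sub1seq !inE mem_cat inE eqxx !orbT.
exists a, b, (a2 :: A ++ b1 :: B), [::], [:: c]; split=> //.
- by rewrite /dipath Upath1 /= rcons_cat cat_path /= rcons_path Eaa2 pA EaLb1 pB EbLb.
- by rewrite /dipath /= Eab inE ab.
- by rewrite /dipath Upath3 /= Ebc Eca.
split=> //; last exact: eq_disjoint0.
- by rewrite /= size_cat /=; lia.
- by rewrite disjoint_sym; apply: eq_disjoint0.
by rewrite disjoint_sym disjoint_has /= orbF.
Qed.

Hypothesis tourE : is_tournament E.

Lemma arc_or_subdiv s L M x P y Q : ucycle E s -> s = L ++ M ->
  M ++ L = x :: P ++ y :: Q -> k <= (size Q).+1 ->
  E x y \/ contains_subdiv_B E k 1 1.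
Proof.
move=> Us sLM eML Qk; move: Us; rewrite sLM ucycle_catC eML => Uc.
have xy : x != y.
  move: (ucycle_uniq Uc) => /= /andP[+ _]; apply: contraNneq => ->.
  by rewrite mem_cat inE eqxx orbT.
have [Exy|nExy] := boolP (E x y); [by left | right].
apply: (@subdiv_of_chord y Q x P) (tournament_flip tourE xy nExy) Qk.
by rewrite -cat_cons ucycle_catC.
Qed.

Lemma subdiv_of_ucycle (s : seq T) :
  3 <= k -> ucycle E s -> size s = (2 * k - 1)%N -> contains_subdiv_B E k 1 1.
Proof.
move=> k3 Us Ss.
(* a = v_0, b = v_1, a2 :: A = v_2 ... v_{k-1}, c = v_k, b1 :: B = v_{k+1} ... v_{2k-2} *)
have [a [b [a2 [A [c [b1 [B [sE sA sB]]]]]]]] : exists a b a2 A c b1 B,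
    [/\ s = [:: a, b, a2 & A ++ c :: b1 :: B], size A = k - 3 & size B = k - 3].
  case: s {Us} Ss => [|a [|b t]] //=; try lia; move=> St.
  have sT : size (take (k - 2) t) = k - 2 by rewrite size_takel; lia.
  have sD : size (drop (k - 2) t) = k - 1 by rewrite size_drop; lia.
  move: (take _ t) (drop _ t) (cat_take_drop (k - 2) t) sT sD.
  case=> [|a2 A] [|c [|b1 B]] //= <- sA sB; try lia.
  by exists a, b, a2, A, c, b1, B; split=> //; lia.
rewrite {s}sE in Us Ss.
have [Eaa2|//] : E a a2 \/ contains_subdiv_B E k 1 1.
  apply: (@arc_or_subdiv _ [::] _ a [:: b] a2 (A ++ c :: b1 :: B) Us) => //.
    by rewrite cats0.
  by rewrite size_cat /=; lia.
have [EaLb1|//] : E (last a2 A) b1 \/ contains_subdiv_B E k 1 1.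
  apply: (@arc_or_subdiv _ [:: a, b & belast a2 A] [:: last a2 A, c, b1 & B]
    _ [:: c] _ (B ++ [:: a, b & belast a2 A]) Us) => //.
    by rewrite /= -[belast a2 A ++ _]cat_rcons -lastI.
  by rewrite size_cat /= size_belast; lia.
have [EbLb|//] : E (last b1 B) b \/ contains_subdiv_B E k 1 1.
  apply: (@arc_or_subdiv _ [:: a, b, a2 & A ++ c :: belast b1 B] [:: last b1 B]
    _ [:: a] _ (a2 :: A ++ c :: belast b1 B) Us) => //.
    by rewrite /= -catA /= cats1 -lastI.
  by rewrite /= size_cat /= size_belast; lia.
have [Ebc|//] : E b c \/ contains_subdiv_B E k 1 1.
  apply: (@arc_or_subdiv _ [:: a] _ b (a2 :: A) c (b1 :: B ++ [:: a]) Us) => //.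
    by rewrite /= -catA.
  by rewrite /= size_cat /=; lia.
have [Eca|//] : E c a \/ contains_subdiv_B E k 1 1.
  apply: (@arc_or_subdiv _ [:: a, b, a2 & A] _ c (b1 :: B) a [:: b, a2 & A] Us) => //.
  by rewrite /=; lia.
by apply: (subdiv_of_forward_arcs Us); rewrite ?sA ?sB; lia.
Qed.

End Subdivision.

Theorem mainTheorem6 (k : nat) (T : finType) (E : rel T) :
  3 <= k -> #|T| = (2 * k - 1)%N ->
  is_tournament E -> strongly_connected E ->
  contains_subdiv_B E k 1 1.
Proof.
move=> k3 cardT tourE scE.
have [c [Uc Sc]] := tournament_hamiltonian tourE scE ltac:(lia).
by apply: (subdiv_of_ucycle tourE k3 Uc); rewrite Sc cardT.
Qed.
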